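(* Let $\mathfrak{A}$ be a finite-dimensional $C^*$-algebra with canonical normalized trace $\tau$ and $\|X\|_2=\sqrt{\tau(X^*X)}$. Let $\mathcal{N}$ be a $k$-net of order $d$ over $\mathfrak{A}$ with $2\le k\le\sqrt d$, and let $\mathcal{A}_1,\dots,\mathcal{A}_k$ be the linear spans of its parallel classes. Let $P=P^2=P^*\in\mathrm{Span}(\mathcal{N})$ with $\tau(P)=1/d$, and write $P-\frac1d I=\sum_{j=1}^k A_j$ with $A_j\in\mathcal{A}_j$, $\tau(A_j)=0$ (this decomposition is unique and each $A_j$ is self-adjoint). Put $t_j=\frac{d}{\sqrt{d-1}}\|A_j\|_2$ and let $r$ be an index with $t_r^2\ge 1/k$. Write $A_r=\sum_{s=1}^d\lambda_sQ_s$ where $Q_1,\dots,Q_d$ are the elements of the $r$-th parallel class. Then every $\lambda\in\{\lambda_1,\dots,\lambda_d\}$ (the spectrum of $A_r$) satisfies $$\lambda^2-\frac{d-2}{d}\lambda+\frac{d-1}{d^2}\Big(k-3+\frac1k\Big)\ge 0;$$ in particular $\lambda\le\lambda_-$ or $\lambda\ge\lambda_+$, where $$\lambda_\pm=\frac{1}{2d}\Big(d-2\pm\sqrt{(d-2)^2-4(d-1)\big(k-3+\tfrac1k\big)}\Big)$$ (the discriminant being nonnegative for $k\le\sqrt d$).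
   Context: $\tau=\mathrm{Tr}/\mathrm{Tr}(I)$, where $\mathrm{Tr}$ is the canonical trace of $\mathfrak{A}$ (assigning $1$ to each minimal projection). A $k$-net over $\mathfrak{A}$ is a set $\mathcal{N}$ of orthogonal projections in $\mathfrak{A}$ such that: (i) the relation ''$P=Q$ or $PQ=0$'' is an equivalence relation on $\mathcal{N}$ with exactly $k$ classes (parallel classes); (ii) if $P,Q\in\mathcal{N}$ lie in different classes then $\tau(PQ)=1/\dim(\mathfrak{A})$; (iii) the elements of each class sum to $I$. Order $d$ means every class has exactly $d$ elements. The spans $\mathcal{A}_j$ are commutative unital $*$-subalgebras that are pairwise quasi-orthogonal: $\tau(AB)=\tau(A)\tau(B)$ for $A\in\mathcal{A}_j,B\in\mathcal{A}_\ell$, $j\ne\ell$. *)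

(* A finite-dimensional C*-algebra is modelled (up to
   *-isomorphism) as a finite direct sum  (+)_{i<m} M_{n i}(C)  of full
   matrix algebras over algC; elements are families of blocks. *)
From HB Require Import structures.
From mathcomp Require Import all_boot all_order all_algebra all_field.
Set Implicit Arguments. Unset Strict Implicit. Unset Printing Implicit Defensive.
Import Order.TTheory GRing.Theory Num.Theory.
Local Open Scope ring_scope.

Section CAlg.
Variables (m : nat) (n : 'I_m -> nat).

Definition calg := forall i : 'I_m, 'M[algC]_(n i).

Definition azero : calg := fun i => 0.
Definition aone : calg := fun i => 1%:M.
Definition amul (X Y : calg) : calg := fun i => X i *m Y i.
Definition aadj (X : calg) : calg := fun i => (map_mx Num.conj (X i))^T.

(* canonical trace: 1 on every minimal projection *)
Definition aTr (X : calg) : algC := \sum_i \tr (X i).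
Definition atau (X : calg) : algC := aTr X / aTr aone.
Definition adim : nat := (\sum_i (n i) ^ 2)%N.

Definition anorm2sq (X : calg) : algC := atau (amul (aadj X) X).

Definition is_proj (P : calg) : Prop := amul P P = P /\ aadj P = P.

(* A k-net of order d, presented as an injective family Q j s
   (j : parallel class, s : element within the class). *)
Definition is_net (k d : nat) (Q : 'I_k -> 'I_d -> calg) : Prop :=
  [/\ forall j s, is_proj (Q j s),
      forall j1 s1 j2 s2, Q j1 s1 = Q j2 s2 -> j1 = j2 /\ s1 = s2,
      forall j s1 s2, s1 != s2 -> amul (Q j s1) (Q j s2) = azero,
      forall j1 j2 s1 s2, j1 != j2 ->
        atau (amul (Q j1 s1) (Q j2 s2)) = (adim%:R)^-1
    & forall j, (fun i => \sum_(s < d) Q j s i) = aone ].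

Definition in_class_span (k d : nat) (Q : 'I_k -> 'I_d -> calg) (j : 'I_k)
  (X : calg) : Prop :=
  exists c : 'I_d -> algC, X = fun i => \sum_(s < d) c s *: Q j s i.

Definition in_net_span (k d : nat) (Q : 'I_k -> 'I_d -> calg) (X : calg) : Prop :=
  exists c : 'I_k -> 'I_d -> algC,
    X = fun i => \sum_(j < k) \sum_(s < d) c j s *: Q j s i.

End CAlg.

(* Fix s and put Q := Q_{r,s} and e := 1/d.  Since Q A_r = lam_s Q and, for
   j <> r, tau(Q A_j) = e tau(A_j) = 0, the projection Q P has trace
   e^2 + lam_s e; as Q P = Q (Q P) P this trace is also ||Q P||_2^2, which
   shows that lam_s is real.  Splitting Q P = (e + lam_s) Q + Y with
   Y := sum_{j<>r} Q A_j orthogonal to Q gives ||Y||^2 explicitly in terms of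
   lam_s.  On the other hand Cauchy-Schwarz bounds ||Y||^2 by
   (k-1) sum_{j<>r} ||Q A_j||^2 = (k-1) e sum_{j<>r} ||A_j||^2, and by
   quasi-orthogonality sum_j ||A_j||^2 = ||P - e I||^2 = e - e^2.  Combined
   with the hypothesis ||A_r||^2 >= (d-1)/(d^2 k) this is exactly the claimed
   quadratic inequality in lam_s; the second claim is the elementary fact
   that a real number at which an upward parabola is nonnegative lies outside
   the open interval between its roots. *)
From HB Require Import structures.
From mathcomp Require Import all_boot all_order all_algebra all_field.
From mathcomp Require Import ring zify.
From Stdlib Require Import FunctionalExtensionality.
Import Order.TTheory GRing.Theory Num.Theory.
Local Open Scope ring_scope.

Section StarAlgebra.
Set Implicit Arguments. Unset Strict Implicit.
Variables (m : nat) (n : 'I_m -> nat).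
Implicit Types (X Y Z U V : calg n) (I : finType).

Definition aadd X Y : calg n := fun i => X i + Y i.
Definition ascale (c : algC) X : calg n := fun i => c *: X i.
Definition alin I (c : I -> algC) (U : I -> calg n) : calg n :=
  fun i => \sum_a c a *: U a i.

Definition adot X Y : algC := atau (amul (aadj X) Y).

Lemma anorm2sqE X : anorm2sq X = adot X X.
Proof. by []. Qed.

Lemma calg_ext X Y : (forall i, X i = Y i) -> X = Y.
Proof. by move=> eqXY; apply: functional_extensionality_dep. Qed.

Lemma atau_add X Y : atau (aadd X Y) = atau X + atau Y.
Proof.
rewrite /atau /aTr /aadd -mulrDl -big_split /=.
by under eq_bigr do rewrite mxtraceD.
Qed.

Lemma atau_scale (c : algC) X : atau (ascale c X) = c * atau X.
Proof.
rewrite /atau /aTr /ascale mulrA mulr_sumr.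
by under eq_bigr do rewrite mxtraceZ.
Qed.

Lemma atau_lin I (c : I -> algC) (U : I -> calg n) :
  atau (alin c U) = \sum_a c a * atau (U a).
Proof.
rewrite /atau /aTr /alin; under eq_bigr do rewrite raddf_sum.
rewrite exchange_big /= mulr_suml; apply: eq_bigr => a _.
rewrite mulrA mulr_sumr; congr (_ * _); apply: eq_bigr => i _.
by rewrite mxtraceZ.
Qed.

Lemma atau_mulC X Y : atau (amul X Y) = atau (amul Y X).
Proof.
rewrite /atau /aTr /amul; congr (_ / _).
by apply: eq_bigr => i _; rewrite mxtrace_mulC.
Qed.

Lemma atau_one : aTr (aone n) != 0 -> atau (aone n) = 1.
Proof. by move=> Tr_neq0; rewrite /atau divff. Qed.

Lemma aTr_one : aTr (aone n) = (\sum_i n i)%N%:R.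
Proof. by rewrite /aTr natr_sum; apply: eq_bigr => i _; rewrite mxtrace1. Qed.

Lemma atau_adj X : atau (aadj X) = (atau X)^*.
Proof.
rewrite /atau aTr_one rmorphM /= fmorphV /= conjC_nat; congr (_ / _).
rewrite /aTr rmorph_sum; apply: eq_bigr => i _.
by rewrite /aadj mxtrace_tr trace_map_mx.
Qed.

Lemma amulA X Y Z : amul X (amul Y Z) = amul (amul X Y) Z.
Proof. by apply: calg_ext => i; rewrite /amul mulmxA. Qed.

Lemma amul1r X : amul (aone n) X = X.
Proof. by apply: calg_ext => i; rewrite /amul mul1mx. Qed.

Lemma amulr1 X : amul X (aone n) = X.
Proof. by apply: calg_ext => i; rewrite /amul mulmx1. Qed.

Lemma amulDl X Y Z : amul (aadd X Y) Z = aadd (amul X Z) (amul Y Z).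
Proof. by apply: calg_ext => i; rewrite /amul /aadd mulmxDl. Qed.

Lemma amulDr X Y Z : amul Z (aadd X Y) = aadd (amul Z X) (amul Z Y).
Proof. by apply: calg_ext => i; rewrite /amul /aadd mulmxDr. Qed.

Lemma amulZl (c : algC) X Z : amul (ascale c X) Z = ascale c (amul X Z).
Proof. by apply: calg_ext => i; rewrite /amul /ascale scalemxAl. Qed.

Lemma amulZr (c : algC) X Z : amul Z (ascale c X) = ascale c (amul Z X).
Proof. by apply: calg_ext => i; rewrite /amul /ascale scalemxAr. Qed.

Lemma amul_linl I (c : I -> algC) (U : I -> calg n) Z :
  amul (alin c U) Z = alin c (fun a => amul (U a) Z).
Proof.
apply: calg_ext => i; rewrite /amul /alin mulmx_suml.
by apply: eq_bigr => a _; rewrite scalemxAl.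
Qed.

Lemma amul_linr I (c : I -> algC) (U : I -> calg n) Z :
  amul Z (alin c U) = alin c (fun a => amul Z (U a)).
Proof.
apply: calg_ext => i; rewrite /amul /alin mulmx_sumr.
by apply: eq_bigr => a _; rewrite scalemxAr.
Qed.

Lemma aadjD X Y : aadj (aadd X Y) = aadd (aadj X) (aadj Y).
Proof. by apply: calg_ext => i; rewrite /aadj /aadd map_mxD linearD. Qed.

Lemma aadjZ (c : algC) X : aadj (ascale c X) = ascale c^* (aadj X).
Proof.
apply: calg_ext => i; rewrite /aadj /ascale map_mxZ.
by apply/matrixP => x y; rewrite !mxE.
Qed.

Lemma aadj_lin I (c : I -> algC) (U : I -> calg n) :
  aadj (alin c U) = alin (fun a => (c a)^*) (fun a => aadj (U a)).
Proof.
apply: calg_ext => i; rewrite /aadj /alin map_mx_sum raddf_sum.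
by apply: eq_bigr => a _; rewrite map_mxZ; apply/matrixP => x y; rewrite !mxE.
Qed.

Lemma aadjM X Y : aadj (amul X Y) = amul (aadj Y) (aadj X).
Proof. by apply: calg_ext => i; rewrite /aadj /amul map_mxM trmx_mul. Qed.

Lemma aadj1 : aadj (aone n) = aone n.
Proof. by apply: calg_ext => i; rewrite /aadj /aone map_mx1 trmx1. Qed.

(* Positivity of the trace: tau(X^* X) = sum |X_ab|^2 / Tr(I) >= 0. *)
Lemma anorm2sq_ge0 X : 0 <= anorm2sq X.
Proof.
rewrite /anorm2sq /atau aTr_one; apply: divr_ge0 => //.
apply: sumr_ge0 => i _; apply: sumr_ge0 => a _; rewrite mxE.
by apply: sumr_ge0 => b _; rewrite !mxE mulrC mul_conjC_ge0.
Qed.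

Lemma anorm2sq_comb (a b : algC) U V :
  anorm2sq (aadd (ascale a U) (ascale b V)) =
  a^* * a * anorm2sq U + a^* * b * adot U V
  + b^* * a * adot V U + b^* * b * anorm2sq V.
Proof.
rewrite /anorm2sq /adot aadjD !aadjZ amulDl !amulDr !amulZl !amulZr.
by rewrite !atau_add !atau_scale; ring.
Qed.

Lemma adot_linl I (w : I -> algC) (x : I -> calg n) Y :
  (forall a, 0 <= w a) -> adot (alin w x) Y = \sum_a w a * adot (x a) Y.
Proof.
move=> w_ge0; rewrite /adot aadj_lin amul_linl atau_lin.
by apply: eq_bigr => a _; rewrite conj_Creal // ger0_real.
Qed.

Lemma adot_linr I (w : I -> algC) (x : I -> calg n) Y :
  adot Y (alin w x) = \sum_a w a * adot Y (x a).
Proof. by rewrite /adot amul_linr atau_lin. Qed.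

(* Cauchy-Schwarz for a nonnegative combination with total weight W:
   ||sum_a w_a x_a||^2 <= W sum_a w_a ||x_a||^2.  It follows by expanding
   0 <= sum_a w_a ||W x_a - X||^2 where X := sum_a w_a x_a. *)
Lemma anorm2sq_lin_le I (w : I -> algC) (x : I -> calg n) :
  (forall a, 0 <= w a) -> 0 < \sum_a w a ->
  anorm2sq (alin w x) <= (\sum_a w a) * \sum_a w a * anorm2sq (x a).
Proof.
move=> w_ge0 W_gt0; set W := \sum_a w a; set X := alin w x.
have W_real : W^* = W by rewrite conj_Creal // gtr0_real.
have spread_ge0 : 0 <= \sum_a w a * anorm2sq (aadd (ascale W (x a)) (ascale (-1) X)).
  by apply: sumr_ge0 => a _; rewrite mulr_ge0 ?anorm2sq_ge0.
have spreadE : \sum_a w a * anorm2sq (aadd (ascale W (x a)) (ascale (-1) X)) =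
  \sum_a (W ^+ 2 * (w a * anorm2sq (x a)) - W * (w a * adot (x a) X)
           - W * (w a * adot X (x a)) + anorm2sq X * w a).
  by apply: eq_bigr => a _; rewrite anorm2sq_comb W_real rmorphN rmorph1; ring.
rewrite spreadE big_split !sumrB /= -!mulr_sumr -adot_linl // -adot_linr in spread_ge0.
have : 0 <= W * (W * \sum_a w a * anorm2sq (x a) - anorm2sq X).
  by move: spread_ge0; congr (0 <= _); rewrite -/X -/W /anorm2sq /adot; ring.
by rewrite pmulr_rge0 // subr_ge0.
Qed.

End StarAlgebra.

Section NetTraces.
Set Implicit Arguments. Unset Strict Implicit.
Variables (m : nat) (n : 'I_m -> nat) (k d : nat) (Q : 'I_k -> 'I_d -> calg n).
Hypotheses (hQ : is_net Q) (hk2 : (2 <= k)%N) (hTr : aTr (aone n) != 0).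

Let e : algC := d%:R^-1.

Lemma net_proj j s : amul (Q j s) (Q j s) = Q j s /\ aadj (Q j s) = Q j s.
Proof. by case: hQ => proj _ _ _ _; exact: proj. Qed.

Lemma net_orth j s t : s != t -> amul (Q j s) (Q j t) = azero n.
Proof. by case: hQ => _ _ orth _ _; exact: orth. Qed.

Lemma net_cross j1 j2 s1 s2 :
  j1 != j2 -> atau (amul (Q j1 s1) (Q j2 s2)) = (adim n)%:R^-1.
Proof. by case: hQ => _ _ _ cross _; exact: cross. Qed.

Lemma net_partition j : alin (fun=> 1) (Q j) = aone n.
Proof.
case: hQ => _ _ _ _ part; rewrite -(part j); apply: calg_ext => i.
by apply: eq_bigr => s _; rewrite scale1r.
Qed.

Lemma other_class j : exists l : 'I_k, l != j.
Proof.
have k_gt0 : (0 < k)%N by apply: leq_trans hk2.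
case: j => -[|j] ltjk.
  by exists (Ordinal hk2); apply/eqP => /(congr1 val).
by exists (Ordinal k_gt0); apply/eqP => /(congr1 val).
Qed.

(* tau(Q_{j,t}) = d / dim: multiply Q_{j,t} by the partition of unity of
   another class. *)
Lemma atau_net_adim j t : atau (Q j t) = d%:R * (adim n)%:R^-1.
Proof.
have [l ne_lj] := other_class j.
rewrite -(amulr1 (Q j t)) -(net_partition l) amul_linr atau_lin.
rewrite (eq_bigr (fun _ => (adim n)%:R^-1)) => [|u _].
  by rewrite sumr_const card_ord mulr_natl.
by rewrite mul1r net_cross // eq_sym.
Qed.

(* Summing over a class: 1 = tau(I) = d^2 / dim, hence dim = d^2. *)
Lemma net_count : d%:R * (d%:R * (adim n)%:R^-1) = 1 :> algC.
Proof.
have [l _] := other_class (Ordinal (leq_trans (isT : (0 < 2)%N) hk2)).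
rewrite -[RHS](atau_one hTr) -(net_partition l) atau_lin.
rewrite (eq_bigr (fun _ => d%:R * (adim n)%:R^-1)) => [|u _].
  by rewrite sumr_const card_ord [LHS]mulr_natl.
by rewrite mul1r atau_net_adim.
Qed.

Lemma net_order_neq0 : d%:R != 0 :> algC.
Proof.
by apply/eqP => d_eq0; move: net_count; rewrite d_eq0 mul0r => /eqP; rewrite eq_sym oner_eq0.
Qed.

Lemma adim_inv : (adim n)%:R^-1 = e ^+ 2.
Proof.
have d_neq0 := net_order_neq0.
rewrite /e exprVn; apply: (mulfI d_neq0); apply: (mulfI d_neq0).
by rewrite net_count mulrA -expr2 divff // expf_neq0.
Qed.

Lemma atau_net j t : atau (Q j t) = e.
Proof.
by rewrite atau_net_adim adim_inv /e expr2 mulrA divff ?net_order_neq0 ?mul1r.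
Qed.

Lemma atau_net_cross j1 j2 s1 s2 :
  j1 != j2 -> atau (amul (Q j1 s1) (Q j2 s2)) = e ^+ 2.
Proof. by move=> ne_j; rewrite net_cross // adim_inv. Qed.

Lemma amul_net_span j s c : amul (Q j s) (alin c (Q j)) = ascale (c s) (Q j s).
Proof.
apply: calg_ext => i; rewrite /amul /alin /ascale mulmx_sumr (bigD1 s) //=.
rewrite big1 => [|t ne_ts].
  have [/(congr1 (fun X => X i)) /= idem _] := net_proj j s.
  by rewrite addr0 -scalemxAr [Q j s i *m _]idem.
have /(congr1 (fun X => X i)) /= orth : amul (Q j s) (Q j t) = azero n.
  by apply: net_orth; rewrite eq_sym.
by rewrite -scalemxAr [Q j s i *m _]orth scaler0.
Qed.

Lemma atau_span j c : atau (alin c (Q j)) = e * \sum_s c s.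
Proof. by rewrite atau_lin mulr_sumr; apply: eq_bigr => s _; rewrite atau_net mulrC. Qed.

Lemma class_span_adj j X : in_class_span Q j X -> in_class_span Q j (aadj X).
Proof.
case=> c ->; exists (fun s => (c s)^*); rewrite -/(alin c (Q j)) aadj_lin.
by apply: calg_ext => i; apply: eq_bigr => s _; have [_ ->] := net_proj j s.
Qed.

Lemma class_span_mul j X Y :
  in_class_span Q j X -> in_class_span Q j Y -> in_class_span Q j (amul X Y).
Proof.
case=> a ->; case=> b ->; exists (fun s => a s * b s).
rewrite -/(alin a (Q j)) -/(alin b (Q j)) amul_linl.
by apply: calg_ext => i; apply: eq_bigr => s _; rewrite amul_net_span /ascale scalerA.
Qed.

Lemma atau_net_mul_span l u j X :
  l != j -> in_class_span Q j X -> atau (amul (Q l u) X) = e * atau X.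
Proof.
move=> ne_lj [c ->]; rewrite -/(alin c (Q j)) amul_linr atau_lin atau_span.
rewrite !mulr_sumr; apply: eq_bigr => s _.
by rewrite atau_net_cross // expr2 mulrC mulrA.
Qed.

Lemma quasi_orth j l X Y : j != l ->
  in_class_span Q j X -> in_class_span Q l Y -> atau (amul X Y) = atau X * atau Y.
Proof.
move=> ne_jl spanX [b ->]; rewrite -/(alin b (Q l)) amul_linr atau_lin atau_span.
rewrite !mulr_sumr; apply: eq_bigr => u _.
by rewrite atau_mulC (atau_net_mul_span u _ spanX) 1?eq_sym //; ring.
Qed.

End NetTraces.

Section ComponentSpectrum.
Set Implicit Arguments. Unset Strict Implicit.
Variables (m : nat) (n : 'I_m -> nat) (k d : nat) (Q : 'I_k -> 'I_d -> calg n).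
Hypotheses (hQ : is_net Q) (hk2 : (2 <= k)%N) (hTr : aTr (aone n) != 0).
Variables (P : calg n) (A : 'I_k -> calg n) (r : 'I_k) (lam : 'I_d -> algC).
Hypotheses (hP : is_proj P) (hPtr : atau P = d%:R^-1)
  (hAspan : forall j, in_class_span Q j (A j)) (hAtr : forall j, atau (A j) = 0)
  (hdec : forall i, P i - d%:R^-1 *: 1%:M = \sum_(j < k) A j i)
  (hlam : A r = fun i => \sum_(t < d) lam t *: Q r t i).
Variable s : 'I_d.

Let e : algC := d%:R^-1.
Let Qs : calg n := Q r s.

Let offr (j : 'I_k) : algC := (j != r)%:R.
Let Y : calg n := alin offr (fun j => amul Qs (A j)).

Lemma P_decomp : P = aadd (ascale e (aone n)) (alin (fun=> 1) A).
Proof.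
apply: calg_ext => i; rewrite /aadd /ascale /aone /alin.
by under eq_bigr do rewrite scale1r; rewrite -hdec addrC subrK.
Qed.

(* Pythagoras for the quasi-orthogonal components:
   sum_j ||A_j||^2 = ||P - e I||^2 = e - e^2. *)
Lemma sum_anorm2sq_components : \sum_j anorm2sq (A j) = e - e ^+ 2.
Proof.
have diag : anorm2sq (alin (fun=> 1) A) = \sum_j anorm2sq (A j).
  rewrite anorm2sqE adot_linl => [|_]; last exact: ler01.
  apply: eq_bigr => j _; rewrite mul1r adot_linr (bigD1 j) //= big1 ?addr0 ?mul1r //.
  move=> l ne_lj; rewrite mul1r /adot (@quasi_orth _ _ _ _ _ hQ hk2 hTr j l).
  - by rewrite hAtr mulr0.
  - by rewrite eq_sym.
  - exact: class_span_adj.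
  - exact: hAspan.
rewrite -diag; have -> : alin (fun=> 1) A = aadd (ascale 1 P) (ascale (- e) (aone n)).
  apply: calg_ext => i; rewrite /alin /aadd /ascale /aone.
  by under eq_bigr do rewrite scale1r; rewrite -hdec scale1r scaleNr.
have e_real : (- e)^* = - e by rewrite conj_Creal // rpredN realV realn.
have [PP PJ] := hP.
rewrite anorm2sq_comb e_real rmorph1 /anorm2sq /adot.
rewrite PJ aadj1 PP !amulr1 !amul1r atau_one // hPtr /e; ring.
Qed.

Lemma atau_Q_other j : j != r -> atau (amul Qs (A j)) = 0.
Proof.
move=> ne_jr; rewrite (@atau_net_mul_span _ _ _ _ _ hQ hk2 hTr r s j).
- by rewrite hAtr mulr0.
- by rewrite eq_sym.
- exact: hAspan.
Qed.

Lemma amul_Q_Ar : amul Qs (A r) = ascale (lam s) Qs.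
Proof. by rewrite hlam -/(alin lam (Q r)) (amul_net_span hQ). Qed.

Lemma atau_QP : atau (amul Qs P) = e ^+ 2 + lam s * e.
Proof.
rewrite {1}P_decomp amulDr amulZr amulr1 atau_add atau_scale amul_linr atau_lin.
rewrite (atau_net hQ hk2 hTr) (bigD1 r) //= big1 => [|j ne_jr]; last first.
  by rewrite atau_Q_other ?mulr0.
by rewrite amul_Q_Ar atau_scale (atau_net hQ hk2 hTr) /e; ring.
Qed.

(* As P and Q are projections, ||Q P||^2 = tau(P Q Q P) = tau(Q P). *)
Lemma anorm2sq_QP : anorm2sq (amul Qs P) = atau (amul Qs P).
Proof.
have [QQ QJ] := net_proj hQ r s; have [PP PJ] := hP.
by rewrite /anorm2sq aadjM PJ QJ -amulA (amulA Qs Qs P) QQ atau_mulC -amulA PP.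
Qed.

(* Hence lam_s = d (||Q P||^2 - e^2) is real. *)
Lemma eigenvalue_real : lam s \is Num.real.
Proof.
have -> : lam s = (atau (amul Qs P) - e ^+ 2) * d%:R.
  by rewrite atau_QP /e; field; exact: (net_order_neq0 hQ hk2 hTr).
by rewrite rpredM ?realn // rpredB ?rpredX ?realV ?realn // -anorm2sq_QP ger0_real ?anorm2sq_ge0.
Qed.

Lemma QP_split : amul Qs P = aadd (ascale (e + lam s) Qs) (ascale 1 Y).
Proof.
rewrite {1}P_decomp amulDr amulZr amulr1 amul_linr; apply: calg_ext => i.
rewrite /aadd /ascale /Y /alin (bigD1 r) //= [in RHS](bigD1 r) //= /offr eqxx.
rewrite scale0r add0r amul_Q_Ar /ascale !scale1r scalerDl addrA.
by congr (_ + _); apply: eq_bigr => j ->; rewrite scale1r.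
Qed.

Lemma adot_Q_Y : adot Qs Y = 0.
Proof.
have [QQ QJ] := net_proj hQ r s.
rewrite /adot QJ /Y amul_linr atau_lin big1 // => j _.
rewrite amulA QQ /offr; case: (eqVneq j r) => [->|ne_jr]; first by rewrite mul0r.
by rewrite atau_Q_other ?mulr0.
Qed.

Lemma adot_Y_Q : adot Y Qs = 0.
Proof.
have [_ QJ] := net_proj hQ r s.
have := atau_adj (amul Qs Y); rewrite aadjM QJ.
by move: adot_Q_Y; rewrite /adot QJ => -> ->; rewrite rmorph0.
Qed.

(* Comparing ||Q P||^2 computed two ways gives ||Y||^2 in terms of lam_s. *)
Lemma anorm2sq_Y : anorm2sq Y = e ^+ 2 + lam s * e - (e + lam s) ^+ 2 * e.
Proof.
have mu_real : (e + lam s)^* = e + lam s.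
  by rewrite conj_Creal // rpredD ?eigenvalue_real ?realV ?realn.
have QQ := net_proj hQ r s.
have normQ : anorm2sq Qs = e by rewrite /anorm2sq QQ.2 QQ.1 (atau_net hQ hk2 hTr).
have := anorm2sq_QP; rewrite atau_QP QP_split anorm2sq_comb adot_Q_Y adot_Y_Q.
by rewrite normQ mu_real rmorph1 => <-; ring.
Qed.

(* ||Q A_j||^2 = tau(Q A_j A_j^* ) = e ||A_j||^2, as A_j A_j^* lies in A_j. *)
Lemma anorm2sq_QA j : j != r -> anorm2sq (amul Qs (A j)) = e * anorm2sq (A j).
Proof.
move=> ne_jr; have [QQ QJ] := net_proj hQ r s.
rewrite /anorm2sq aadjM QJ -amulA (amulA Qs Qs) QQ atau_mulC -amulA.
rewrite (@atau_net_mul_span _ _ _ _ _ hQ hk2 hTr r s j) ?(eq_sym r) //.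
  by rewrite atau_mulC.
by apply: (class_span_mul hQ); [exact: hAspan | exact/(class_span_adj hQ)/hAspan].
Qed.

(* Cauchy-Schwarz over the k - 1 classes other than r. *)
Lemma anorm2sq_Y_le :
  anorm2sq Y <= (k%:R - 1) * (e * \sum_(j < k | j != r) anorm2sq (A j)).
Proof.
have offr_ge0 j : 0 <= offr j by rewrite ler0n.
have offr_sum : \sum_j offr j = k%:R - 1.
  have count : \sum_(j < k) (1 : algC) = k%:R by rewrite sumr_const card_ord.
  rewrite -count (bigD1 r) //= [in RHS](bigD1 r) //= /offr eqxx add0r.
  by rewrite addrAC subrr add0r; apply: eq_bigr => j ->.
have := anorm2sq_lin_le (fun j => amul Qs (A j)) offr_ge0.
rewrite offr_sum subr_gt0 ltr1n hk2 => /(_ isT); congr (_ <= _ * _).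
rewrite (bigD1 r) //= /offr eqxx mul0r add0r mulr_sumr.
by apply: eq_bigr => j ne_jr; rewrite ne_jr mul1r anorm2sq_QA.
Qed.

Lemma eigenvalue_quadratic_ge0 : (1 < d)%N ->
  (k%:R)^-1 <= (d%:R ^+ 2 / (d%:R - 1)) * anorm2sq (A r) ->
  0 <= lam s ^+ 2 - (d%:R - 2) / d%:R * lam s
       + (d%:R - 1) / d%:R ^+ 2 * (k%:R - 3 + (k%:R)^-1).
Proof.
move=> d_gt1 hr.
have d_neq0 : d%:R != 0 :> algC by rewrite pnatr_eq0 -lt0n ltnW.
have k_neq0 : k%:R != 0 :> algC by rewrite pnatr_eq0 -lt0n (leq_trans _ hk2).
have d1_gt0 : 0 < d%:R - 1 :> algC by rewrite subr_gt0 ltr1n.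
have Ar_lb : (d%:R - 1) / d%:R ^+ 2 / k%:R <= anorm2sq (A r).
  have y_gt0 : 0 < (d%:R - 1) / d%:R ^+ 2 :> algC.
    by rewrite divr_gt0 // exprn_gt0 // ltr0n ltnW.
  move: hr; rewrite -(ler_pM2l y_gt0) mulrA.
  have -> : (d%:R - 1) / d%:R ^+ 2 * (d%:R ^+ 2 / (d%:R - 1)) = 1 :> algC.
    by field; rewrite d_neq0 lt0r_neq0.
  by rewrite mul1r.
set S := \sum_(j < k | j != r) anorm2sq (A j).
have S_eq : S = e - e ^+ 2 - anorm2sq (A r).
  by rewrite -sum_anorm2sq_components (bigD1 r) //= -/S; ring.
have -> : lam s ^+ 2 - (d%:R - 2) / d%:R * lam s
          + (d%:R - 1) / d%:R ^+ 2 * (k%:R - 3 + (k%:R)^-1) =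
     d%:R * ((k%:R - 1) * (e * S) - anorm2sq Y) +
     (k%:R - 1) * (anorm2sq (A r) - (d%:R - 1) / d%:R ^+ 2 / k%:R).
  by rewrite anorm2sq_Y S_eq /e; field; rewrite k_neq0 d_neq0.
rewrite addr_ge0 // mulr_ge0 ?ler0n ?subr_ge0 ?anorm2sq_Y_le //.
by rewrite ler1n (leq_trans _ hk2).
Qed.

End ComponentSpectrum.

(* For 2 <= k <= sqrt d the discriminant (d-2)^2 - 4(d-1)(k-3+1/k) is
   nonnegative: multiplied by k it is a polynomial in k and t := d - k^2 with
   nonnegative value. *)
Lemma discriminant_ge0 (k d : nat) : (2 <= k)%N -> (k ^ 2 <= d)%N ->
  0 <= (d%:R - 2) ^+ 2 - 4 * (d%:R - 1) * (k%:R - 3 + (k%:R)^-1) :> algC.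
Proof.
move=> hk2 hkd.
set z : int := k%:Z * (d%:Z - 2) ^+ 2 - 4 * (d%:Z - 1) * (k%:Z ^+ 2 - 3 * k%:Z + 1).
have z_ge0 : 0 <= z.
  rewrite /z; have [t ->] : exists t, d = (k ^ 2 + t)%N by exists (d - k ^ 2)%N; lia.
  nia.
have k_neq0 : k%:R != 0 :> algC by rewrite pnatr_eq0 -lt0n (leq_trans _ hk2).
have -> : (d%:R - 2) ^+ 2 - 4 * (d%:R - 1) * (k%:R - 3 + (k%:R)^-1) =
          z%:~R / k%:R :> algC.
  rewrite /z !(rmorphB, rmorphM, rmorphD, rmorphXn, rmorph1) /= -!pmulrn.
  by field.
by rewrite divr_ge0 ?ler0z.
Qed.

Lemma quadratic_ge0_outside_roots (a b c x : algC) :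
  0 < a -> b \is Num.real -> x \is Num.real -> 0 <= b ^+ 2 - 4 * a * c ->
  0 <= a * x ^+ 2 - b * x + c ->
  x <= (2 * a)^-1 * (b - sqrtC (b ^+ 2 - 4 * a * c))
  \/ (2 * a)^-1 * (b + sqrtC (b ^+ 2 - 4 * a * c)) <= x.
Proof.
move=> a_gt0 b_real x_real D_ge0.
set q := sqrtC _; set xm := _ * (b - q); set xp := _ * (b + q).
have q_ge0 : 0 <= q by rewrite sqrtC_ge0.
have a_neq0 : a != 0 by rewrite gt_eqF.
have factor : a * x ^+ 2 - b * x + c = a * ((x - xm) * (x - xp)).
  have c_eq : c = (b ^+ 2 - q ^+ 2) / (4 * a) by rewrite sqrtCK; field.
  by rewrite c_eq /xm /xp; field.
have xm_real : xm \is Num.real.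
  by rewrite /xm realM ?realV ?realM ?realB ?realn ?(gtr0_real a_gt0) ?(ger0_real q_ge0).
rewrite factor pmulr_rge0 // => prod_ge0.
case: (real_leP x_real xm_real) => [|xm_lt_x]; first by left.
by right; move: prod_ge0; rewrite pmulr_rge0 ?subr_gt0 // subr_ge0.
Qed.

Theorem mainTheorem5 (m : nat) (n : 'I_m -> nat) (hn : forall i, (0 < n i)%N)
  (k d : nat) (hk2 : (2 <= k)%N) (hkd : (k ^ 2 <= d)%N)
  (Q : 'I_k -> 'I_d -> calg n) (hQ : is_net Q)
  (P : calg n) (hP : is_proj P) (hPspan : in_net_span Q P)
  (hPtr : atau P = (d%:R)^-1)
  (A : 'I_k -> calg n)
  (hAspan : forall j, in_class_span Q j (A j))
  (hAtr : forall j, atau (A j) = 0)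
  (hdec : forall i, P i - (d%:R)^-1 *: 1%:M = \sum_(j < k) A j i)
  (r : 'I_k)
  (hr : (k%:R)^-1 <= (d%:R ^+ 2 / (d%:R - 1)) * anorm2sq (A r))
  (lam : 'I_d -> algC)
  (hlam : A r = fun i => \sum_(s < d) lam s *: Q r s i) :
  let c := (d%:R - 1) / (d%:R ^+ 2) * (k%:R - 3 + (k%:R)^-1) : algC in
  let disc := (d%:R - 2) ^+ 2 - 4 * (d%:R - 1) * (k%:R - 3 + (k%:R)^-1) : algC in
  let lamm := (2 * d%:R)^-1 * (d%:R - 2 - sqrtC disc) : algC in
  let lamp := (2 * d%:R)^-1 * (d%:R - 2 + sqrtC disc) : algC in
  forall s : 'I_d,
    0 <= lam s ^+ 2 - (d%:R - 2) / d%:R * lam s + c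
    /\ (lam s <= lamm \/ lamp <= lam s).
Proof.
move=> c disc lamm lamp s.
have d_gt1 : (1 < d)%N by nia.
have d_gt0 : 0 < d%:R :> algC by rewrite ltr0n ltnW.
have hTr : aTr (aone n) != 0.
  apply/eqP => Tr0; move: hPtr; rewrite /atau Tr0 invr0 mulr0 => /esym/eqP.
  by rewrite invr_eq0 gt_eqF.
have quad_ge0 := eigenvalue_quadratic_ge0 hQ hk2 hTr hP hPtr hAspan hAtr hdec hlam s d_gt1 hr.
split=> //.
(* Locate lam_s against the roots of d x^2 - (d-2) x + d c, of discriminant disc. *)
have lam_real := eigenvalue_real hQ hk2 hTr hP hAspan hAtr hdec hlam s.
have disc_eq : (d%:R - 2) ^+ 2 - 4 * d%:R * (d%:R * c) = disc.
  by rewrite /c /disc; field; apply/andP; split; rewrite pnatr_eq0 -lt0n ltnW.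
have := @quadratic_ge0_outside_roots d%:R (d%:R - 2) (d%:R * c) (lam s) d_gt0.
rewrite disc_eq rpredB ?realn // => /(_ isT lam_real (discriminant_ge0 hk2 hkd)).
apply; rewrite (_ : _ + _ = d%:R * (lam s ^+ 2 - (d%:R - 2) / d%:R * lam s + c)).
  by rewrite pmulr_rge0.
by field; rewrite gt_eqF.
Qed.
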